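(* Let $F$ be a finite field with $q=|F|$. Let $m,n\in\mathbb{N}$ with $m\le n+1$, and let $x\in F^{m+n+1}$. Then $$(q-1)\cdot[\operatorname{rank}(H_{m,n}(x))\le m] = \sum_{\substack{v\in F^{1\times(m+1)}\\ v\ne0}}[v\,H_{m,n}(x)=0] \;-\; q\sum_{\substack{v\in F^{1\times m}\\ v\ne 0}}[v\,H_{m-1,n+1}(x)=0].$$
   Context: $\mathbb{N}=\{0,1,2,\ldots\}$. For a statement $\mathcal{A}$, $[\mathcal{A}]$ is $1$ if $\mathcal{A}$ is true and $0$ otherwise. For $x=(x_0,\ldots,x_N)\in F^{N+1}$ and integers $p,p'\ge -1$ with $p+p'\le N$, $H_{p,p'}(x)=(x_{i+j})_{0\le i\le p,\,0\le j\le p'}$ (a $(p+1)\times(p'+1)$ matrix). Row vectors $v$ multiply matrices from the left. *)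

From mathcomp Require Import all_boot all_order all_algebra.
Set Implicit Arguments. Unset Strict Implicit. Unset Printing Implicit Defensive.
Import GRing.Theory.
Local Open Scope ring_scope.

(* Hankel matrix H_{k-1,l-1}(x) as a k x l matrix with entries x_{i+j},
   where x : 'rV[F]_N is (x_0, ..., x_{N-1}).  Indices are used with
   i + j < N in all applications below (inord is only a total fallback). *)
Definition hankel (F : Type) (N k l : nat) (x : 'rV[F]_N.+1) : 'M[F]_(k, l) :=
  \matrix_(i < k, j < l) x 0 (inord (i + j)).
Arguments hankel {F} N k l x.

From mathcomp Require Import all_boot all_order all_algebra.
From mathcomp Require Import zify ring.
Set Implicit Arguments. Unset Strict Implicit. Unset Printing Implicit Defensive.
Import GRing.Theory.
Local Open Scope ring_scope.

(* Proof of Proposition 12.  Write A = H_{m,n}(x) and B = H_{m-1,n+1}(x), and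
   K_A, K_B for their left kernels.  The sums in the statement count the nonzero
   vectors of K_A and K_B, and rank A <= m means that K_A is nontrivial, so the
   identity reduces to: #|K_B| = 1 when K_A = 0, and #|K_A| = q #|K_B| otherwise.

   Everything is expressed through the Hankel form h_w(j) = sum_i w_i x_{i+j},
   the j-th entry of w H.  Let S be the set of w in K_A with w_m = 0 and
   h_w(n+1) = 0; padding by a final zero is a bijection from K_B onto S.
   - Because m <= n+1, the symmetric pairing sum_{i,l} u_l w_i x_{i+l+n+1-m}
     evaluates to u_m h_w(n+1) on K_A, hence u_m h_w(n+1) = w_m h_u(n+1): the
     map w |-> (w_m, h_w(n+1)) has rank at most one on K_A.
   - Shifting coordinates by one position maps S into K_A without killing nonzero
     vectors, while m+1 shifts kill everything; so S is a proper subspace of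
     K_A as soon as K_A is nontrivial.
   Hence S is a hyperplane of K_A, cut out by a linear functional, and a
   hyperplane of a finite F-space has index q. *)

Lemma card_hyperplane_section (F : finFieldType) (V : finLmodType F)
    (K : {set V}) (lam : V -> F) (w0 : V) :
  (forall c u v, u \in K -> v \in K -> c *: u + v \in K) ->
  (forall c u v, lam (c *: u + v) = c * lam u + lam v) ->
  w0 \in K -> lam w0 = 1 ->
  #|K| = (#|[set w in K | lam w == 0%R]| * #|F|)%N.
Proof.
move=> K_lin lam_lin K_w0 lam_w0; set S := [set w in K | lam w == 0].
pose f (p : V * F) := p.2 *: w0 + p.1.
have lam_f s t : lam (f (s, t)) = t + lam s by rewrite /f lam_lin lam_w0 mulr1.
have -> : K = f @: setX S [set: F].
  apply/setP => w; apply/idP/imsetP => [Kw|[[s t]]].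
  - exists (w - lam w *: w0, lam w); last by rewrite /f /= addrC subrK.
    have lam_d : lam (w - lam w *: w0) = 0.
      by rewrite addrC -scaleNr lam_lin lam_w0 mulr1 addNr.
    by rewrite in_setX !inE lam_d eqxx addrC -scaleNr K_lin.
  - by rewrite in_setX !inE => /andP[/andP[Ks _] _] ->; apply: K_lin.
rewrite card_in_imset ?cardsX ?cardsT // => -[s t] [s' t'].
rewrite !in_setX !inE => /andP[/andP[_ /eqP ls] _] /andP[/andP[_ /eqP ls'] _].
move=> eq_f; have eq_t : t = t'.
  by have := congr1 lam eq_f; rewrite !lam_f ls ls' !addr0.
by move: eq_f; rewrite /f /= eq_t => /addrI ->.
Qed.

Section HankelForm.
Variables (R : comNzRingType) (a : nat -> R).

Definition hform k (v : 'rV[R]_k) (j : nat) : R := \sum_(i < k) v 0 i * a (i + j).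

Lemma hformD k c (u v : 'rV[R]_k) j : hform (c *: u + v) j = c * hform u j + hform v j.
Proof.
rewrite /hform mulr_sumr -big_split; apply: eq_bigr => i _.
by rewrite !mxE mulrDl mulrA.
Qed.

Definition annihilates k l (v : 'rV[R]_k) : bool := [forall j : 'I_l, hform v j == 0].

Lemma annihilatesP k l (v : 'rV[R]_k) :
  reflect (forall j, (j < l)%N -> hform v j = 0) (annihilates l v).
Proof.
apply: (iffP forallP) => [h j lt_jl|h j]; last exact/eqP/h.
by have /eqP := h (Ordinal lt_jl).
Qed.

Lemma annihilatesD k l c (u v : 'rV[R]_k) :
  annihilates l u -> annihilates l v -> annihilates l (c *: u + v).
Proof.
move=> /annihilatesP hu /annihilatesP hv; apply/annihilatesP => j lt_jl.
by rewrite hformD hu ?hv ?mulr0 ?addr0.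
Qed.

Lemma hform_pairing k (u w : 'rV[R]_k) d :
  \sum_(l < k) u 0 l * hform w (l + d) = \sum_(i < k) w 0 i * hform u (i + d).
Proof.
rewrite /hform; under eq_bigr do rewrite mulr_sumr.
rewrite exchange_big; apply: eq_bigr => i _; rewrite mulr_sumr.
by apply: eq_bigr => l _; rewrite mulrCA addnCA.
Qed.

Lemma hform_moment m n (u w : 'rV[R]_m.+1) : (m <= n.+1)%N ->
  annihilates n.+1 w ->
  \sum_(l < m.+1) u 0 l * hform w (l + (n.+1 - m)) = u 0 ord_max * hform w n.+1.
Proof.
move=> hmn /annihilatesP w_ker.
rewrite big_ord_recr /= subnKC // big1 ?add0r // => l _.
by rewrite w_ker ?mulr0 //=; have := ltn_ord l; lia.
Qed.

(* On the kernel, w |-> (w_m, h_w(n+1)) has rank at most one. *)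
Lemma hankel_rank_one m n (u w : 'rV[R]_m.+1) : (m <= n.+1)%N ->
  annihilates n.+1 u -> annihilates n.+1 w ->
  u 0 ord_max * hform w n.+1 = w 0 ord_max * hform u n.+1.
Proof.
move=> hmn u_ker w_ker.
by rewrite -(hform_moment u hmn w_ker) hform_pairing hform_moment.
Qed.

Section Reindexing.
Variable k : nat.

Definition shift (w : 'rV[R]_k.+1) : 'rV[R]_k.+1 :=
  \row_(i < k.+1) if nat_of_ord i is j.+1 then w 0 (inord j) else 0.

Lemma shiftE (w : 'rV[R]_k.+1) (i : 'I_k) :
  shift w 0 (lift ord0 i) = w 0 (widen_ord (leqnSn k) i).
Proof.
rewrite mxE lift0; congr (w 0 _); apply/val_inj.
by rewrite /= inordK // ltnS ltnW.
Qed.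

Lemma hform_shift (w : 'rV[R]_k.+1) (j : nat) :
  w 0 ord_max = 0 -> hform (shift w) j = hform w j.+1.
Proof.
move=> w_last; rewrite /hform big_ord_recl mxE mul0r add0r.
rewrite big_ord_recr /= w_last mul0r addr0; apply: eq_bigr => i _.
by rewrite shiftE /bump add1n addSnnS.
Qed.

Lemma shift_neq0 (w : 'rV[R]_k.+1) : w 0 ord_max = 0 -> w != 0 -> shift w != 0.
Proof.
move=> w_last; apply: contra => /eqP /rowP sh0; apply/eqP/rowP => i; rewrite mxE.
have [lt_ik|ge_ik] := ltnP i k.
  have := sh0 (lift ord0 (Ordinal lt_ik)); rewrite shiftE mxE => <-.
  by congr (w 0 _); apply/val_inj.
have -> : i = ord_max by apply/val_inj/eqP; rewrite eqn_leq ge_ik -ltnS ltn_ord.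
exact: w_last.
Qed.

Lemma iter_shift_lead t (w : 'rV[R]_k.+1) (i : 'I_k.+1) :
  (i < t)%N -> iter t shift w 0 i = 0.
Proof.
elim: t i => [//|t IH] i lt_it /=; rewrite mxE.
case E : (nat_of_ord i) => [//|j]; rewrite IH // inordK; have := ltn_ord i; lia.
Qed.

Lemma iter_shift_full (w : 'rV[R]_k.+1) : iter k.+1 shift w = 0.
Proof. by apply/rowP => i; rewrite iter_shift_lead ?mxE. Qed.

Definition pad (v : 'rV[R]_k) : 'rV[R]_k.+1 :=
  \row_(i < k.+1) if unlift ord_max i is Some j then v 0 j else 0.

Lemma pad_last (v : 'rV[R]_k) : pad v 0 ord_max = 0.
Proof. by rewrite mxE unlift_none. Qed.

Lemma pad_lift (v : 'rV[R]_k) (j : 'I_k) : pad v 0 (lift ord_max j) = v 0 j.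
Proof. by rewrite mxE liftK. Qed.

Lemma hform_pad (v : 'rV[R]_k) (j : nat) : hform (pad v) j = hform v j.
Proof.
rewrite /hform big_ord_recr /= pad_last mul0r addr0; apply: eq_bigr => i _.
have -> : widen_ord (leqnSn k) i = lift ord_max i by apply/val_inj/esym/lift_max.
by rewrite pad_lift.
Qed.

Lemma pad_inj : injective pad.
Proof.
move=> v v' /rowP eq_pad; apply/rowP => j.
by have := eq_pad (lift ord_max j); rewrite !pad_lift.
Qed.

Lemma pad_onto (w : 'rV[R]_k.+1) : w 0 ord_max = 0 -> exists v, w = pad v.
Proof.
move=> w_last; exists (\row_j w 0 (lift ord_max j)); apply/rowP => i.
by rewrite mxE; case: unliftP => [j ->|->]; rewrite ?mxE.
Qed.

End Reindexing.
End HankelForm.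
Arguments shift {R k}.
Arguments pad {R k}.

Section HankelKernels.
Variables (F : finFieldType) (a : nat -> F) (m n : nat).

Definition kerA := [set w : 'rV[F]_m.+1 | annihilates a n.+1 w].
Definition kerB := [set v : 'rV[F]_m | annihilates a n.+2 v].
Definition kerS :=
  [set w in kerA | (w 0 ord_max == 0) && (hform a w n.+1 == 0)].

Lemma kerA_lin c (u v : 'rV[F]_m.+1) : u \in kerA -> v \in kerA -> c *: u + v \in kerA.
Proof. by rewrite !inE; apply: annihilatesD. Qed.

Lemma pad_kerS (v : 'rV[F]_m) : (pad v \in kerS) = (v \in kerB).
Proof.
rewrite !inE pad_last eqxx hform_pad /=.
apply/andP/annihilatesP => [[/annihilatesP v_ker /eqP v_n] j lt_j|v_ker].
  have [lt_jn|ge_jn] := ltnP j n.+1; first by rewrite -(hform_pad a v) v_ker.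
  by have -> : j = n.+1 by lia.
split; last by rewrite v_ker.
by apply/annihilatesP => j lt_j; rewrite hform_pad v_ker //; lia.
Qed.

Lemma card_kerS : #|kerS| = #|kerB|.
Proof.
have -> : kerS = pad @: kerB.
  apply/setP => w; apply/idP/imsetP => [S_w|[v B_v ->]]; last by rewrite pad_kerS.
  move: (S_w); rewrite inE => /and3P[_ /eqP w_last _].
  by have [v def_w] := pad_onto w_last; exists v; rewrite // -pad_kerS -def_w.
by rewrite card_imset //; apply: pad_inj.
Qed.

Lemma card_kerB_le : (#|kerB| <= #|kerA|)%N.
Proof.
by rewrite -card_kerS; apply/subset_leq_card/subsetP => w; rewrite inE => /andP[].
Qed.

(* The shift of a vector of S lies in K_A: h_{shift w}(j) = h_w(j+1). *)
Lemma shift_kerS (w : 'rV[F]_m.+1) : w \in kerS -> shift w \in kerA.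
Proof.
rewrite !inE => /and3P[/annihilatesP w_ker /eqP w_last /eqP w_n].
apply/annihilatesP => j lt_jn; rewrite hform_shift //.
have [lt_j1|ge_j1] := ltnP j.+1 n.+1; first exact: w_ker.
by have -> : j.+1 = n.+1 by lia.
Qed.

(* A nontrivial K_A is not contained in S: otherwise repeated shifts of a
   nonzero kernel vector would stay nonzero, but m+1 shifts give 0. *)
Lemma kerA_not_sub_kerS (w : 'rV[F]_m.+1) :
  w \in kerA -> w != 0 -> ~~ (kerA \subset kerS).
Proof.
move=> A_w w_nz; apply/negP => /subsetP sub.
have iter_ker t : (iter t shift w \in kerA) && (iter t shift w != 0).
  elim: t => [|t /andP[A_t nz_t]] /=; first by rewrite A_w w_nz.
  have S_t := sub _ A_t; rewrite shift_kerS //=.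
  by move: S_t; rewrite inE => /and3P[_ /eqP last_t _]; apply: shift_neq0.
by have /andP[_] := iter_ker m.+1; rewrite iter_shift_full eqxx.
Qed.

Lemma functional_one (p q : F) : (p != 0) || (q != 0) ->
  exists al be : F, al * p + be * q = 1.
Proof.
case/orP => [p_nz|q_nz]; first by exists p^-1, 0; rewrite mulVf ?mul0r ?addr0.
by exists 0, q^-1; rewrite mulVf ?mul0r ?add0r.
Qed.

(* If K_A is nontrivial, S is a hyperplane of it, hence #|K_A| = q #|K_B|. *)
Lemma card_kerA : (m <= n.+1)%N -> (1 < #|kerA|)%N -> #|kerA| = (#|kerB| * #|F|)%N.
Proof.
move=> hmn /card_gt1P[w1 [w2 [A_w1 A_w2 neq_w12]]].
have [w A_w w_nz] : exists2 w, w \in kerA & w != 0.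
  by have [w1_0|] := eqVneq w1 0; [exists w2; rewrite // -w1_0 eq_sym | exists w1].
have /subsetPn[w0 A_w0 S'w0] := kerA_not_sub_kerS A_w w_nz.
pose p := w0 0 ord_max; pose q := hform a w0 n.+1.
have [al [be pq1]] : exists al be : F, al * p + be * q = 1.
  by apply: functional_one; move: S'w0; rewrite [_ \in kerS]inE A_w0 /= negb_and.
pose lam (u : 'rV[F]_m.+1) := al * u 0 ord_max + be * hform a u n.+1.
have lam_coord (u : 'rV[F]_m.+1) : u \in kerA ->
    u 0 ord_max = lam u * p /\ hform a u n.+1 = lam u * q.
  move=> A_u; have rank1 : u 0 ord_max * q = p * hform a u n.+1.
    by apply: hankel_rank_one; rewrite // -[annihilates _ _ _]inE.
  split; apply/eqP; rewrite -subr_eq0.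
    suff -> : u 0 ord_max - lam u * p = be * (u 0 ord_max * q - p * hform a u n.+1).
      by rewrite rank1 subrr mulr0.
    by rewrite /lam -{1}[u 0 ord_max]mulr1 -pq1; ring.
  suff -> : hform a u n.+1 - lam u * q = al * (p * hform a u n.+1 - u 0 ord_max * q).
    by rewrite rank1 subrr mulr0.
  by rewrite /lam -{1}[hform a u n.+1]mulr1 -pq1; ring.
rewrite -card_kerS; have -> : kerS = [set u in kerA | lam u == 0].
  apply/setP => u; rewrite [u \in kerS]inE inE; case A_u : (u \in kerA) => //=.
  have [u_m u_h] := lam_coord u A_u.
  apply/andP/eqP => [[/eqP um0 /eqP uh0]|lam0]; last by rewrite u_m u_h lam0 !mul0r.
  by rewrite /lam um0 uh0 !mulr0 addr0.
apply: card_hyperplane_section A_w0 _ => [c u v|c u v|]; first exact: kerA_lin.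
  by rewrite /lam hformD !mxE; ring.
exact: pq1.
Qed.

End HankelKernels.

Lemma mul_hankel_entry (R : comNzRingType) N k l (x : 'rV[R]_N.+1) (v : 'rV[R]_k)
    (j : 'I_l) :
  (v *m hankel N k l x) 0 j = hform (fun i => x 0 (inord i)) v j.
Proof. by rewrite !mxE; apply: eq_bigr => i _; rewrite mxE. Qed.

Lemma mul_hankel_eq0 (R : comNzRingType) N k l (x : 'rV[R]_N.+1) (v : 'rV[R]_k) :
  (v *m hankel N k l x == 0) = annihilates (fun i => x 0 (inord i)) l v.
Proof.
apply/eqP/annihilatesP => [/rowP v_ker j lt_jl|v_ker].
  by have := v_ker (Ordinal lt_jl); rewrite mul_hankel_entry mxE.
by apply/rowP => j; rewrite mul_hankel_entry mxE v_ker.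
Qed.

Lemma card_kernel_nonzero (R : finNzRingType) k l (M : 'M[R]_(k, l)) :
  (\sum_(v : 'rV[R]_k | v != 0) nat_of_bool (v *m M == 0%R)).+1
  = #|[set v : 'rV[R]_k | v *m M == 0]|.
Proof.
rewrite (cardsD1 0) inE mul0mx eqxx add1n; congr S.
transitivity (\sum_(v : 'rV[R]_k | (v != 0) && (v *m M == 0)) 1%N).
  by rewrite [RHS]big_mkcondr; apply: eq_bigr => v _; case: (v *m M == 0).
by rewrite sum1_card; apply: eq_card => v; rewrite !inE.
Qed.

Lemma rank_lt_kernel (F : finFieldType) k l (M : 'M[F]_(k, l)) :
  (\rank M < k)%N = (1 < #|[set v : 'rV[F]_k | v *m M == 0%R]|)%N.
Proof.
rewrite ltnNge row_leq_rank -kermx_eq0.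
apply/rowV0Pn/card_gt1P => [[v /sub_kermxP vM v_nz]|[u [v []]]].
  by exists v, 0; rewrite !inE vM mul0mx eqxx.
rewrite !inE => /eqP uM /eqP vM neq_uv; exists (u - v); last by rewrite subr_eq0.
by apply/sub_kermxP; rewrite mulmxBl uM vM subrr.
Qed.

Theorem proposition12 (F : finFieldType) (m n : nat) (hmn : (m <= n.+1)%N)
    (x : 'rV[F]_(m + n).+1) :
  (#|F| - 1)%:Z * (nat_of_bool (\rank (hankel (m + n) m.+1 n.+1 x) <= m)%N)%:Z
  = (\sum_(v : 'rV[F]_m.+1 | v != 0)
        nat_of_bool (v *m hankel (m + n) m.+1 n.+1 x == 0%R))%:Z
    - (#|F|)%:Z * (\sum_(v : 'rV[F]_m | v != 0)
        nat_of_bool (v *m hankel (m + n) m n.+2 x == 0%R))%:Z.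
Proof.
pose a i := x 0 (inord i).
have kerAE : [set v | v *m hankel (m + n) m.+1 n.+1 x == 0] = kerA a m n.
  by apply/setP => v; rewrite !inE mul_hankel_eq0.
have kerBE : [set v | v *m hankel (m + n) m n.+2 x == 0] = kerB a m n.
  by apply/setP => v; rewrite !inE mul_hankel_eq0.
have sumA := card_kernel_nonzero (hankel (m + n) m.+1 n.+1 x).
have sumB := card_kernel_nonzero (hankel (m + n) m n.+2 x).
rewrite kerAE in sumA; rewrite kerBE in sumB.
have B_le_A := card_kerB_le a m n.
set sA := (\sum_(v : 'rV[F]_m.+1 | v != 0%R) _)%N in sumA *.
set sB := (\sum_(v : 'rV[F]_m | v != 0%R) _)%N in sumB *.
clearbody sA sB.
(* rank A <= m iff K_A is nontrivial; then #|K_A| = q #|K_B|, and otherwise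
   #|K_A| = #|K_B| = 1. *)
rewrite -ltnS rank_lt_kernel kerAE; case: ltnP => [A_gt1|A_le1] /=.
  have := card_kerA hmn A_gt1; rewrite -sumA -sumB; set q := #|F|; nia.
have [-> ->] : sA = 0%N /\ sB = 0%N.
  by move: B_le_A A_le1; rewrite -sumA -sumB; lia.
lia.
Qed.
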